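(* Let $\mathbb{F}$ be an algebraically closed field of characteristic different from $2$, and let $L$ be a nilpotent Lie algebra of finite dimension $n$ over $\mathbb{F}$ which is generalized Heisenberg of rank $3$ and satisfies $s(L)=5$. Then $n\le 7$.
   Context: A Lie algebra $L$ is generalized Heisenberg of rank $r$ if $L^{2}=Z(L)$ and $\dim L^{2}=r$. Schur multiplier: if $L\cong F/R$ with $F$ a free Lie algebra, then $\mathcal{M}(L)\cong (R\cap F^{2})/[R,F]$. For a non-abelian nilpotent Lie algebra $L$ of dimension $n$, $s(L)\ge0$ is defined by $\dim\mathcal{M}(L)=\frac12(n-1)(n-2)+1-s(L)$. *)

(* A finite-dimensional Lie algebra of dimension n over F is
   given by its structure constants with respect to a basis e_0..e_{n-1}:
   [e_i, e_j] = \sum_k c i j k e_k. *)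
From mathcomp Require Import all_boot all_order all_algebra.
Set Implicit Arguments. Unset Strict Implicit. Unset Printing Implicit Defensive.
Import GRing.Theory.
Local Open Scope ring_scope.

Definition is_lie_sc (F : fieldType) (n : nat) (c : 'I_n -> 'I_n -> 'I_n -> F) : Prop :=
  (forall i k, c i i k = 0) /\
  (forall i j k, c i j k = - c j i k) /\
  (forall i j l m,
     \sum_(k < n) (c i j k * c k l m + c j l k * c k i m + c l i k * c k j m) = 0).

Definition ebas (F : fieldType) (n : nat) (j : 'I_n) : 'rV[F]_n := delta_mx 0 j.

Definition lbr (F : fieldType) (n : nat) (c : 'I_n -> 'I_n -> 'I_n -> F)
  (u v : 'rV[F]_n) : 'rV[F]_n :=
  \row_m \sum_(i < n) \sum_(j < n) u 0 i * v 0 j * c i j m.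

(* lower central series: L^1 = L (index 0 here), L^{k+1} = [L^k, L] *)
Fixpoint lcs (F : fieldType) (n : nat) (c : 'I_n -> 'I_n -> 'I_n -> F) (k : nat)
  : 'M[F]_n :=
  match k with
  | 0 => 1%:M
  | k'.+1 => (\sum_(i < n) \sum_(j < n)
               <<lbr c (row i (lcs c k')) (ebas F j)>>)%MS
  end.

Definition lie_nilpotent (F : fieldType) (n : nat) (c : 'I_n -> 'I_n -> 'I_n -> F) : Prop :=
  exists k, \rank (lcs c k) = 0%N.

Definition derived (F : fieldType) (n : nat) (c : 'I_n -> 'I_n -> 'I_n -> F) : 'M[F]_n :=
  (\sum_(i < n) \sum_(j < n) <<lbr c (ebas F i) (ebas F j)>>)%MS.

Definition center (F : fieldType) (n : nat) (c : 'I_n -> 'I_n -> 'I_n -> F) : 'M[F]_n :=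
  (\bigcap_(j < n) kermx (lin1_mx (fun u : 'rV[F]_n => lbr c u (ebas F j))))%MS.

Definition gen_heisenberg (F : fieldType) (n : nat) (c : 'I_n -> 'I_n -> 'I_n -> F)
  (r : nat) : Prop :=
  (derived c == center c)%MS /\ \rank (derived c) = r.

(* ---- Schur multiplier, computed as H_2(L) = ker d2 / im d3 ----
   L (x) L is 'rV_(n*n) (via mxvec / vec_mx); Lambda^2 L = (L (x) L) / S with
   S spanned by the x (x) x.  Since S <= ker d2~, one gets
   dim H_2(L) = dim ker d2~ - dim (im d3~ + S). *)
Definition tens (F : fieldType) (n : nat) (u v : 'rV[F]_n) : 'rV[F]_(n * n) :=
  mxvec (u^T *m v).

Definition d2 (F : fieldType) (n : nat) (c : 'I_n -> 'I_n -> 'I_n -> F) : 'M[F]_(n * n, n) :=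
  lin1_mx (fun t : 'rV[F]_(n * n) =>
    \row_m \sum_(i < n) \sum_(j < n) (vec_mx t) i j * c i j m).

(* S = span { x (x) x } *)
Definition symsp (F : fieldType) (n : nat) : 'M[F]_(n * n) :=
  ((\sum_(i < n) <<mxvec (delta_mx i i : 'M[F]_n)>>) +
   (\sum_(i < n) \sum_(j < n) <<mxvec (delta_mx i j + delta_mx j i : 'M[F]_n)>>))%MS.

Definition im_d3 (F : fieldType) (n : nat) (c : 'I_n -> 'I_n -> 'I_n -> F) : 'M[F]_(n * n) :=
  (\sum_(i < n) \sum_(j < n) \sum_(l < n)
     <<tens (lbr c (ebas F i) (ebas F j)) (ebas F l)
       - tens (lbr c (ebas F i) (ebas F l)) (ebas F j)
       + tens (lbr c (ebas F j) (ebas F l)) (ebas F i)>>)%MS.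

Definition schur_dim (F : fieldType) (n : nat) (c : 'I_n -> 'I_n -> 'I_n -> F) : nat :=
  (\rank (kermx (d2 c)) - \rank (im_d3 c + symsp F n)%MS)%N.

Definition s_inv (F : fieldType) (n : nat) (c : 'I_n -> 'I_n -> 'I_n -> F) : int :=
  (((n.-1 * n.-2) %/ 2 + 1)%N)%:Z - (schur_dim c)%:Z.

(** Since dim L^2 = 3 and dim S >= n(n+1)/2, the value
    s(L) = 5 leaves room for at most n dimensions of im d3 modulo S; for n >= 8 we
    exhibit 2n - 7 >= n + 1 elements of im d3 that are independent modulo S.
    Choose x, u1, u2 with z1 = [x,u1] and z2 = [x,u2] independent, a bracket
    z3 = [p,q] completing them to a basis of L^2 = Z(L), and linear forms
    zeta1, zeta2, zeta3 on L that are triangularly dual to z1, z2, z3.  Let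
    w_1, ..., w_m span a complement of L^2 + Fx in the subspace
    {v | zeta1 [x,v] = zeta2 [x,v] = 0}, so m >= n - 6.  The elements z_i (x) z_j
    (i < j), d3(x,u1,u2), d3(x,u1,w_j), d3(x,u2,w_j) and one more element of im d3
    are then detected, in a triangular pattern, by alternating forms a /\ b, which
    vanish on S. *)

From HB Require Import structures.
From mathcomp Require Import all_boot all_order all_algebra.
From mathcomp Require Import zify.
Set Implicit Arguments. Unset Strict Implicit. Unset Printing Implicit Defensive.
Import GRing.Theory.
Local Open Scope ring_scope.

Section LinearForms.
Variable F : fieldType.

Definition ev N (u : 'rV[F]_N) (g : 'cV[F]_N) : F := (u *m g) 0 0.

Lemma ev0l N (g : 'cV[F]_N) : ev 0 g = 0.
Proof. by rewrite /ev mul0mx mxE. Qed.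

Lemma evDl N (u v : 'rV[F]_N) g : ev (u + v) g = ev u g + ev v g.
Proof. by rewrite /ev mulmxDl [LHS]mxE. Qed.

Lemma evBl N (u v : 'rV[F]_N) g : ev (u - v) g = ev u g - ev v g.
Proof. by rewrite /ev mulmxBl !mxE. Qed.

Lemma mulmx_ev N (u : 'rV[F]_N) g : u *m g = (ev u g)%:M.
Proof. exact: mx11_scalar. Qed.

Lemma ev_ann N p (u : 'rV[F]_N) (B : 'M_(p, N)) g :
  (u <= B)%MS -> B *m g = 0 -> ev u g = 0.
Proof. by case/submxP => D -> Bg0; rewrite /ev -mulmxA Bg0 mulmx0 mxE. Qed.

Lemma mx_ann N p q r (A : 'M[F]_(q, N)) (B : 'M_(p, N)) (g : 'M_(N, r)) :
  (A <= B)%MS -> B *m g = 0 -> A *m g = 0.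
Proof. by case/submxP => D -> Bg0; rewrite -mulmxA Bg0 mulmx0. Qed.

Lemma sub_kermx_ev N (u : 'rV[F]_N) g : (u <= kermx g)%MS = (ev u g == 0).
Proof.
rewrite sub_kermx /ev; apply/eqP/eqP => [-> | ug0]; first by rewrite mxE.
by apply/matrixP => i j; rewrite !ord1 ug0 mxE.
Qed.

Lemma addsmx_sub_kermx N p (S : 'M[F]_(p, N)) (e : 'rV_N) g :
  (S <= kermx g)%MS -> ev e g = 0 -> (S + e <= kermx g)%MS.
Proof. by move=> Sg eg; rewrite addsmx_sub Sg sub_kermx_ev eg eqxx. Qed.

Lemma addsmx_rows_sub_kermx N p k (S : 'M[F]_(p, N)) (e : 'I_k -> 'rV_N) g :
  (S <= kermx g)%MS -> (forall i, ev (e i) g = 0) ->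
  (S + \matrix_(i < k) e i <= kermx g)%MS.
Proof.
move=> Sg eg; rewrite addsmx_sub Sg; apply/row_subP => i.
by rewrite rowK sub_kermx_ev eg.
Qed.

Lemma separating_form N p (A : 'M[F]_(p, N)) (v : 'rV_N) :
  ~~ (v <= A)%MS -> exists2 g, A *m g = 0 & ev v g = 1.
Proof.
rewrite submxE => /eqP vC_neq0; set w := v *m cokermx A in vC_neq0.
have [j wj_neq0] : exists j, w 0 j != 0.
  case: (pickP (fun j => w 0 j != 0)) => [j wj | w0]; first by exists j.
  exfalso; apply: vC_neq0; apply/rowP => j; rewrite [RHS]mxE.
  by move/negbT: (w0 j); rewrite negbK => /eqP.
exists ((w 0 j)^-1 *: (cokermx A *m delta_mx j 0)).
  by rewrite -scalemxAr mulmxA mulmx_coker mul0mx scaler0.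
by rewrite /ev -scalemxAr mxE mulmxA -colE [col _ _ _ _]mxE mulVf.
Qed.

Lemma exists_delta_nsub N p (Y : 'M[F]_(p, N)) :
  (\rank Y < N)%N -> exists i, ~~ ((delta_mx 0 i : 'rV_N) <= Y)%MS.
Proof.
move=> rankY; have [i Pi | P0] := pickP [pred i | ~~ ((delta_mx 0 i : 'rV_N) <= Y)%MS].
  by exists i.
have : ((1%:M : 'M_N) <= Y)%MS by apply/row_subP => i; rewrite row1; move/negbFE: (P0 i).
by move/mxrankS; rewrite mxrank1 leqNgt rankY.
Qed.

Lemma rV_sub_disjoint N (z z' v : 'rV[F]_N) :
  ~~ (z <= z')%MS -> (v <= z)%MS -> (v <= z')%MS -> v = 0.
Proof.
move=> zz' /sub_rVP[a ->] az_z'; have [-> | a_neq0] := eqVneq a 0; first by rewrite scale0r.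
by case/negP: zz'; rewrite -(scalerK a_neq0 z) scalemx_sub.
Qed.

Lemma mxrank_adds_biorth N p k (S : 'M[F]_(p, N)) (e : 'I_k -> 'rV_N)
    (g : 'I_k -> 'cV_N) :
  (forall j, S <= kermx (g j))%MS -> (forall i j, ev (e i) (g j) = (i == j)%:R) ->
  \rank (S + \matrix_(i < k) e i)%MS = (\rank S + k)%N.
Proof.
move=> Sg eg; set E := \matrix_(i < k) e i; pose G := \matrix_(r, j) g j r 0.
have EG : E *m G = 1%:M.
  by apply/matrixP => i j; rewrite [RHS]mxE -eg /ev !mxE; apply: eq_bigr => r _; rewrite !mxE.
have SG : S *m G = 0.
  apply/matrixP => a j; transitivity ((S *m g j) a 0).
    by rewrite !mxE; apply: eq_bigr => r _; rewrite !mxE.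
  by rewrite (sub_kermxP (Sg j)) !mxE.
have rankE : \rank E = k.
  by apply/eqP; rewrite eqn_leq rank_leq_row -{1}(mxrank1 F k) -EG mxrankM_maxl.
rewrite mxrank_disjoint_sum ?rankE //; apply/eqP; rewrite -submx0.
apply/rV_subP => y yc; have yS := submx_trans yc (capmxSl _ _).
have /submxP[D yD] := submx_trans yc (capmxSr _ _).
have D0 : D = 0 by rewrite -[D]mulmx1 -EG mulmxA -yD (mx_ann yS SG).
by rewrite yD D0 mul0mx sub0mx.
Qed.

Lemma mxrank_adds_form N p (S : 'M[F]_(p, N)) (e : 'rV_N) (g : 'cV_N) :
  (S <= kermx g)%MS -> ev e g != 0 -> \rank (S + e)%MS = (\rank S + 1)%N.
Proof.
move=> Sg eg; have eE : \matrix_(i < 1) e = e by apply/matrixP => i j; rewrite !ord1 mxE.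
rewrite -{1}eE (mxrank_adds_biorth (g := fun=> (ev e g)^-1 *: g)) //.
  by move=> _; rewrite sub_kermx -scalemxAr (sub_kermxP Sg) scaler0.
by move=> i j; rewrite !ord1 eqxx /ev -scalemxAr mxE mulVf.
Qed.

Lemma mxrank_adds_nsub N p (A : 'M[F]_(p, N)) (v : 'rV_N) :
  ~~ (v <= A)%MS -> \rank (A + v)%MS = (\rank A + 1)%N.
Proof.
case/separating_form => g Ag vg; apply: (mxrank_adds_form (g := g)).
  by rewrite sub_kermx Ag.
by rewrite vg oner_neq0.
Qed.

Lemma mxrank_adds_row_le N p (A : 'M[F]_(p, N)) (v : 'rV_N) :
  (\rank (A + v) <= \rank A + 1)%N.
Proof. exact: leq_trans (leq_of_leqif (mxrank_adds_leqif A v)) (leq_add _ (rank_leq_row v)). Qed.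

Lemma dual_forms_mod N k p (A : 'M[F]_(k, N)) (B : 'M_(p, N)) :
  (forall r : 'rV_k, (r *m A <= B)%MS -> r = 0) ->
  exists H : 'M_(N, k), A *m H = 1%:M /\ B *m H = 0.
Proof.
move=> Aindep; have : row_free (A *m cokermx B).
  rewrite -kermx_eq0; apply/eqP/row_matrixP => i; rewrite row0; apply: Aindep.
  by rewrite submxE -mulmxA -row_mul mulmx_ker row0.
case/row_freeP => D AD; exists (cokermx B *m D).
by rewrite mulmxA AD mulmxA mulmx_coker mul0mx.
Qed.

Lemma complement_indep N p (Y : 'M[F]_(p, N)) (f1 f2 : 'cV_N) (u1 u2 : 'rV_N)
    (K := (kermx f1 :&: kermx f2)%MS) :
  (Y <= K)%MS -> ev u1 f1 = 1 -> ev u1 f2 = 0 -> ev u2 f2 = 1 ->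
  forall r : 'rV_(1 + \rank (K :\: Y)),
  (r *m col_mx u2 (row_base (K :\: Y)) <= Y + u1)%MS -> r = 0.
Proof.
move=> YK u1f1 u1f2 u2f2 r; set W := row_base _.
have [Kf1 Kf2] : K *m f1 = 0 /\ K *m f2 = 0.
  by split; apply/sub_kermxP; [apply: capmxSl | apply: capmxSr].
have WK : (W <= K)%MS by rewrite eq_row_base diffmxSl.
have WD : (W :=: K :\: Y)%MS := eq_row_base _.
have Wfree : row_free W := row_base_free _.
clearbody W.
rewrite -[r]hsubmxK mul_row_col => rA_sub.
have B2 : (Y + u1)%MS *m f2 = 0.
  apply/sub_kermxP; rewrite addsmx_sub sub_kermx_ev u1f2 eqxx andbT.
  exact: submx_trans YK (capmxSr _ _).
have r1_0 : lsubmx r = 0.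
  move: (mx_ann rA_sub B2); rewrite mulmxDl -!mulmxA (mx_ann WK Kf2) mulmx0 addr0.
  by rewrite (mulmx_ev u2) u2f2 mulmx1.
move: rA_sub; rewrite r1_0 mul0mx add0r => /sub_addsmxP[[y b] /= rW].
have b0 : b = 0.
  move: (congr1 (mulmx^~ f1) rW); rewrite mulmxDl -!mulmxA (mx_ann WK Kf1) mulmx0.
  by rewrite (mx_ann YK Kf1) mulmx0 add0r (mulmx_ev u1) u1f1 mulmx1.
have r2_0 : rsubmx r *m W = 0.
  have : (rsubmx r *m W <= (K :\: Y) :&: Y)%MS.
    by rewrite sub_capmx -WD submxMl rW b0 mul0mx addr0 submxMl.
  by rewrite capmx_diff submx0 => /eqP.
by rewrite (row_free_inj Wfree (etrans r2_0 (esym (mul0mx _ _)))) row_mx0.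
Qed.

Lemma lin1_mx_linear m N (f : 'rV[F]_m -> 'rV[F]_N) :
  linear f -> forall u, u *m lin1_mx f = f u.
Proof.
move=> fL; pose g : {linear 'rV[F]_m -> 'rV[F]_N} := HB.pack f (GRing.isLinear.Build _ _ _ _ f fL).
exact: (mul_rV_lin1 g).
Qed.

Lemma linear_sub_basis m N p (f : 'rV[F]_m -> 'rV[F]_N) (V : 'M_(p, N)) :
  linear f -> (forall j, f (delta_mx 0 j) <= V)%MS -> forall u, (f u <= V)%MS.
Proof.
move=> fL fV u; rewrite -lin1_mx_linear //; apply: submx_trans (submxMl _ _) _.
apply/row_subP => j; suff -> : row j (lin1_mx f) = f (delta_mx 0 j) by [].
by apply/rowP => k; rewrite !mxE.
Qed.

End LinearForms.

Section TensorForms.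
Variables (F : fieldType) (n : nat).
Implicit Types (u v : 'rV[F]_n) (a b : 'cV[F]_n).

Definition wedge a b : 'cV[F]_(n * n) := (mxvec (a *m b^T - b *m a^T))^T.

Lemma tensPl k u u' v : tens (k *: u + u') v = k *: tens u v + tens u' v.
Proof. by rewrite /tens linearP /= mulmxDl -scalemxAl linearP. Qed.

Lemma tensPr k u v v' : tens u (k *: v + v') = k *: tens u v + tens u v'.
Proof. by rewrite /tens mulmxDr -scalemxAr linearP. Qed.

Lemma tens0l v : tens 0 v = 0.
Proof. by rewrite /tens trmx0 mul0mx linear0. Qed.

Lemma tens_delta (i j : 'I_n) : tens (ebas F i) (ebas F j) = mxvec (delta_mx i j).
Proof. by rewrite /tens /ebas trmx_delta mul_delta_mx. Qed.

Lemma ev_tens_wedge u v a b :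
  ev (tens u v) (wedge a b) = ev u a * ev v b - ev u b * ev v a.
Proof.
rewrite /wedge /tens /ev mxvec_dotmul mulmxBr mulmxBl -!mulmxA -!trmx_mul !mulmxA.
by rewrite !mxE !big_ord1 !mxE.
Qed.

Lemma ev_mxvec_delta (M : 'M[F]_n) (i j : 'I_n) : ev (mxvec M) (mxvec (delta_mx i j))^T = M i j.
Proof. by rewrite /ev mxvec_delta trmx_delta -colE mxE mxvecE. Qed.

Lemma symsp_sub_ker_wedge a b : (symsp F n <= kermx (wedge a b))%MS.
Proof.
rewrite /symsp addsmx_sub; apply/andP; split.
  apply/sumsmx_subP => i _; rewrite genmxE sub_kermx_ev -tens_delta ev_tens_wedge.
  by rewrite mulrC subrr.
apply/sumsmx_subP => i _; apply/sumsmx_subP => j _; rewrite genmxE sub_kermx_ev.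
rewrite linearD /= -!tens_delta /ev mulmxDl mxE -!/(ev _ _) !ev_tens_wedge.
by rewrite addrC [ev _ a * _]mulrC [ev _ b * _]mulrC subrKA subrr.
Qed.

Lemma card_pairs_le : (#|[set ij : 'I_n * 'I_n | (ij.1 <= ij.2)%N]|).*2 = (n * n.+1)%N.
Proof.
set A := [set ij : 'I_n * 'I_n | _]; pose swap (ij : 'I_n * 'I_n) := (ij.2, ij.1).
have swapK : involutive swap by case.
have AUswap : A :|: swap @^-1: A = setT.
  by apply/setP => -[i j]; rewrite !inE /= leq_total.
have AIswap : A :&: swap @^-1: A = [set (i, i) | i : 'I_n].
  apply/setP => -[i j]; rewrite !inE /= -eqn_leq; apply/eqP/imsetP => [/val_inj-> | [k _ [-> ->]]].
    by exists j.
  by [].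
have := cardsUI A (swap @^-1: A).
rewrite AUswap AIswap cardsT card_prod card_imset; last by move=> i j [].
rewrite (card_preimset _ (inv_inj swapK)) !card_ord => card_eq.
by rewrite -addnn -card_eq mulnS addnC.
Qed.

Lemma rank_symsp : (n * n.+1 <= (\rank (symsp F n)).*2)%N.
Proof.
set A := [set ij : 'I_n * 'I_n | (ij.1 <= ij.2)%N].
pose e (k : 'I_#|A|) : 'rV[F]_(n * n) := let ij := enum_val k in
  mxvec (if ij.1 == ij.2 then delta_mx ij.1 ij.1 else delta_mx ij.1 ij.2 + delta_mx ij.2 ij.1).
pose g (k : 'I_#|A|) := (mxvec (delta_mx (enum_val k).1 (enum_val k).2 : 'M[F]_n))^T.
have rankE : \rank ((0 : 'M[F]_(n * n)) + \matrix_(k < #|A|) e k)%MS = #|A|.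
  rewrite (mxrank_adds_biorth (g := g)) ?mxrank0 // => [j | k l]; first by rewrite sub0mx.
  have := enum_valP k; have := enum_valP l; rewrite !inE -(inj_eq enum_val_inj) /e /g.
  case: (enum_val k) => [i j] /=; case: (enum_val l) => [i' j'] /= le_ij' le_ij.
  rewrite ev_mxvec_delta xpair_eqE; case: eqP => [<- | /eqP neq_ij]; rewrite !mxE.
    by rewrite eq_sym (eq_sym j').
  rewrite [(i' == j) && _](_ : _ = false) ?addr0 1?eq_sym 1?(eq_sym j') //.
  apply/andP => -[/eqP ij' /eqP ji']; move: neq_ij.
  by rewrite -(inj_eq val_inj) eqn_leq le_ij ij' ji' le_ij'.
rewrite -card_pairs_le leq_double -rankE; apply: mxrankS.
rewrite addsmx_sub sub0mx; apply/row_subP => k; rewrite rowK /e.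
case: (enum_val k) => i j /=; case: ifP => _.
  by apply: submx_trans (addsmxSl _ _); apply: (sumsmx_sup i) => //; rewrite genmxE.
apply: submx_trans (addsmxSr _ _); apply: (sumsmx_sup i) => //.
by apply: (sumsmx_sup j) => //; rewrite genmxE linearD.
Qed.

End TensorForms.

Section Bracket.
Variables (F : fieldType) (n : nat) (c : 'I_n -> 'I_n -> 'I_n -> F).
Local Notation br := (lbr c).
Local Notation L2 := (derived c).
Implicit Types (u v w : 'rV[F]_n) (a b : 'cV[F]_n).

Lemma lbrPl k u u' v : br (k *: u + u') v = k *: br u v + br u' v.
Proof.
apply/rowP => m; rewrite !mxE mulr_sumr -big_split; apply: eq_bigr => i _.
rewrite mulr_sumr -big_split; apply: eq_bigr => j _.
by rewrite !mxE !mulrDl !mulrA.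
Qed.

Lemma lbrPr k u v v' : br u (k *: v + v') = k *: br u v + br u v'.
Proof.
apply/rowP => m; rewrite !mxE mulr_sumr -big_split; apply: eq_bigr => i _.
rewrite mulr_sumr -big_split; apply: eq_bigr => j _.
by rewrite !mxE !mulrDr !mulrDl !mulrA [k * _]mulrC.
Qed.

Lemma lbr_sub_derived u v : (br u v <= L2)%MS.
Proof.
apply: (linear_sub_basis (f := br^~ v)) => [k ? ? | i]; first exact: lbrPl.
apply: (linear_sub_basis (f := br _)) => [k ? ? | j]; first exact: lbrPr.
by apply: (sumsmx_sup i) => //; apply: (sumsmx_sup j) => //; rewrite genmxE.
Qed.

Lemma derived_sub_d2 : (L2 <= d2 c)%MS.
Proof.
apply/sumsmx_subP => i _; apply/sumsmx_subP => j _; rewrite genmxE /d2.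
set f := fun t => _; suff <- : f (tens (ebas F i) (ebas F j)) = br (ebas F i) (ebas F j).
  rewrite -lin1_mx_linear ?submxMl // => k s t.
  apply/rowP => m; rewrite !mxE mulr_sumr -big_split; apply: eq_bigr => i' _.
  rewrite mulr_sumr -big_split; apply: eq_bigr => j' _.
  by rewrite linearP !mxE mulrDl mulrA.
apply/rowP => m; rewrite !mxE /tens mxvecK; apply: eq_bigr => i' _.
by apply: eq_bigr => j' _; rewrite !mxE big_ord1 !mxE.
Qed.

Definition d3 u v w := tens (br u v) w - tens (br u w) v + tens (br v w) u.

Let addrBDA (V : zmodType) (a1 a2 b1 b2 c1 c2 : V) :
  (a1 + a2) - (b1 + b2) + (c1 + c2) = (a1 - b1 + c1) + (a2 - b2 + c2).
Proof. by rewrite opprD (addrACA a1) (addrACA (a1 - b1)). Qed.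

Lemma d3Pl k u u' v w : d3 (k *: u + u') v w = k *: d3 u v w + d3 u' v w.
Proof. by rewrite /d3 !lbrPl !tensPl tensPr addrBDA scalerDr scalerBr. Qed.

Lemma d3Pm k u v v' w : d3 u (k *: v + v') w = k *: d3 u v w + d3 u v' w.
Proof. by rewrite /d3 lbrPr lbrPl !tensPl tensPr addrBDA scalerDr scalerBr. Qed.

Lemma d3Pr k u v w w' : d3 u v (k *: w + w') = k *: d3 u v w + d3 u v w'.
Proof. by rewrite /d3 !lbrPr !tensPl tensPr addrBDA scalerDr scalerBr. Qed.

Lemma d3_sub_im_d3 u v w : (d3 u v w <= im_d3 c)%MS.
Proof.
apply: (linear_sub_basis (f := fun u => d3 u v w)) => [k ? ? | i]; first exact: d3Pl.
apply: (linear_sub_basis (f := fun v => d3 _ v w)) => [k ? ? | j]; first exact: d3Pm.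
apply: (linear_sub_basis (f := d3 _ _)) => [k ? ? | l]; first exact: d3Pr.
apply: (sumsmx_sup i) => //; apply: (sumsmx_sup j) => //.
by apply: (sumsmx_sup l) => //; rewrite genmxE.
Qed.

Lemma ev_d3_wedge u v w a b : L2 *m b = 0 ->
  ev (d3 u v w) (wedge a b) =
  ev (br u v) a * ev w b - ev (br u w) a * ev v b + ev (br v w) a * ev u b.
Proof.
move=> L2b; rewrite /d3 evDl evBl !ev_tens_wedge.
by rewrite !(ev_ann (lbr_sub_derived _ _) L2b) !mul0r !subr0.
Qed.

Hypothesis lie : is_lie_sc c.

Lemma lbr_antisym u v : br u v = - br v u.
Proof.
case: lie => _ [c_anti _]; apply/rowP => m; rewrite !mxE exchange_big -sumrN.
apply: eq_bigr => i _; rewrite -sumrN; apply: eq_bigr => j _.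
by rewrite (c_anti j i) mulrN (mulrC (u 0 j)).
Qed.

Lemma lbr_self (two_neq0 : 2%:R != 0 :> F) u : br u u = 0.
Proof.
have : 2%:R *: br u u = 0 by rewrite scaler_nat mulr2n {1}lbr_antisym addNr.
by move/eqP; rewrite scaler_eq0 (negbTE two_neq0) => /eqP.
Qed.

End Bracket.

Section GeneralizedHeisenberg.
Variables (F : fieldType) (n : nat) (c : 'I_n -> 'I_n -> 'I_n -> F).
Hypothesis lie : is_lie_sc c.
Hypothesis heis : gen_heisenberg c 3.
Local Notation br := (lbr c).
Local Notation L2 := (derived c).
Implicit Types (u v w z : 'rV[F]_n).

Lemma rank_derived : \rank L2 = 3%N.
Proof. by case: heis. Qed.

Lemma lbr_derived_l z v : (z <= L2)%MS -> br z v = 0.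
Proof.
case: heis => /andP[L2_sub_Z _] _ zL2; apply/eqP; rewrite -submx0.
apply: (linear_sub_basis (f := br z)) => [k ? ? | j]; first exact: lbrPr.
have /sub_bigcapmxP/(_ j isT) := submx_trans zL2 L2_sub_Z.
by rewrite sub_kermx lin1_mx_linear ?submx0 // => k ? ?; apply: lbrPl.
Qed.

Lemma lbr_derived_r z v : (z <= L2)%MS -> br v z = 0.
Proof. by move=> zL2; rewrite lbr_antisym // lbr_derived_l ?oppr0. Qed.

Lemma d3_derived u v z : (z <= L2)%MS -> d3 c u v z = tens (br u v) z.
Proof. by move=> zL2; rewrite /d3 !(lbr_derived_r _ zL2) !tens0l subr0 addr0. Qed.

Lemma exists_lbr_nsub p (Y : 'M[F]_(p, n)) :
  (\rank Y < 3)%N -> exists i j, ~~ (br (ebas F i) (ebas F j) <= Y)%MS.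
Proof.
move=> rankY; have L2_nsub : ~~ (L2 <= Y)%MS.
  by apply/negP => /mxrankS; rewrite rank_derived leqNgt rankY.
pose P := [pred ij : 'I_n * 'I_n | ~~ (br (ebas F ij.1) (ebas F ij.2) <= Y)%MS].
have [[i j] Pij | P0] := pickP P; first by exists i, j.
case/negP: L2_nsub; apply/sumsmx_subP => i _; apply/sumsmx_subP => j _.
by rewrite genmxE; move/negbFE: (P0 (i, j)).
Qed.

Lemma exists_ad_rank2 : exists x u1 u2, br x u1 != 0 /\ ~~ (br x u2 <= br x u1)%MS.
Proof.
have [i [j]] : exists i j, ~~ (br (ebas F i) (ebas F j) <= (0 : 'M_n))%MS.
  by apply: exists_lbr_nsub; rewrite mxrank0.
set x := ebas F i; set t := ebas F j; rewrite submx0 => xt_neq0.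
have [k [l]] := exists_lbr_nsub (leq_ltn_trans (rank_leq_row (br x t)) (isT : (1 < 3)%N)).
set y := ebas F k; set w := ebas F l => yw_nsub.
have yw_neq0 : br y w != 0 by apply: contraNneq yw_nsub => ->; rewrite sub0mx.
(* Otherwise [y,t] and [x,w] lie on both lines F[x,t] and F[y,w], so x + y works. *)
have [xw_sub | xw_nsub] := boolP (br x w <= br x t)%MS; last by exists x, t, w.
have [ty_sub | ty_nsub] := boolP (br t y <= br t x)%MS; last first.
  by exists t, x, y; split; rewrite // lbr_antisym // oppr_eq0.
have [yt_sub | yt_nsub] := boolP (br y t <= br y w)%MS; last by exists y, w, t.
have [wx_sub | wx_nsub] := boolP (br w x <= br w y)%MS; last first.
  by exists w, y, x; split; rewrite // lbr_antisym // oppr_eq0.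
have yt0 : br y t = 0.
  apply: rV_sub_disjoint yw_nsub yt_sub _.
  by move: ty_sub; rewrite lbr_antisym // (lbr_antisym lie t) !eqmx_opp.
have xw0 : br x w = 0.
  apply: rV_sub_disjoint yw_nsub _ xw_sub.
  by move: wx_sub; rewrite lbr_antisym // (lbr_antisym lie w) !eqmx_opp.
exists (x + y), t, w.
have lbrDl v : br (x + y) v = br x v + br y v by have := lbrPl c 1 x y v; rewrite !scale1r.
by rewrite !lbrDl yt0 xw0 addr0 add0r.
Qed.

Lemma exists_derived_flag :
  exists x u1 u2 p q (zeta1 zeta2 zeta3 : 'cV[F]_n),
  [/\ ev (br x u1) zeta1 = 1,
      ev (br x u1) zeta2 = 0 /\ ev (br x u2) zeta2 = 1 &
      [/\ ev (br x u1) zeta3 = 0, ev (br x u2) zeta3 = 0 & ev (br p q) zeta3 = 1]].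
Proof.
have [x [u1 [u2 [z1_neq0 z2_nsub]]]] := exists_ad_rank2.
set z1 := br x u1 in z1_neq0 z2_nsub *; set z2 := br x u2 in z2_nsub *.
have [i [j z3_nsub]] : exists i j, ~~ (br (ebas F i) (ebas F j) <= z1 + z2)%MS.
  by apply: exists_lbr_nsub; rewrite mxrank_adds_nsub // addn1 !ltnS rank_leq_row.
have [zeta1 _ z1zeta1] : exists2 g, (0 : 'M_n) *m g = 0 & ev z1 g = 1.
  by apply: separating_form; rewrite submx0.
have [zeta2 ann2 z2zeta2] := separating_form z2_nsub.
have [zeta3 ann3 z3zeta3] := separating_form z3_nsub.
exists x, u1, u2, (ebas F i), (ebas F j), zeta1, zeta2, zeta3.
rewrite (ev_ann (submx_refl z1) ann2).
by rewrite (ev_ann (addsmxSl z1 z2) ann3) (ev_ann (addsmxSr z1 z2) ann3).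
Qed.

Lemma exists_complement_forms (two_neq0 : 2%:R != 0 :> F) x u1 u2 (zeta1 zeta2 : 'cV[F]_n) :
  ev (br x u1) zeta1 = 1 -> ev (br x u1) zeta2 = 0 -> ev (br x u2) zeta2 = 1 ->
  exists m (W : 'M[F]_(m, n)) (E : 'M[F]_(n, 1 + m)),
  [/\ (n - 6 <= m)%N,
      forall j, ev (br x (row j W)) zeta1 = 0 /\ ev (br x (row j W)) zeta2 = 0,
      col_mx u2 W *m E = 1%:M &
      (L2 + x + u1)%MS *m E = 0].
Proof.
move=> z1zeta1 z1zeta2 z2zeta2.
have ev_ad v g : ev v (lin1_mx (br x) *m g) = ev (br x v) g.
  by rewrite /ev mulmxA lin1_mx_linear // => k ? ?; apply: lbrPr.
set f1 := lin1_mx (br x) *m zeta1; set f2 := lin1_mx (br x) *m zeta2.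
set K := (kermx f1 :&: kermx f2)%MS; set Y := (L2 + x)%MS.
have Y_ker (g : 'cV[F]_n) : (Y <= kermx (lin1_mx (br x) *m g))%MS.
  rewrite addsmx_sub; apply/andP; split; last by rewrite sub_kermx_ev ev_ad lbr_self // ev0l.
  by apply/row_subP => k; rewrite sub_kermx_ev ev_ad lbr_derived_r ?row_sub // ev0l.
have YK : (Y <= K)%MS by rewrite sub_capmx !Y_ker.
have rankK : (n - 2 <= \rank K)%N.
  have := mxrank_sum_cap (kermx f1) (kermx f2); rewrite !mxrank_ker.
  have := rank_leq_col f1; have := rank_leq_col f2.
  have := rank_leq_col (kermx f1 + kermx f2)%MS; rewrite -/K; lia.
have rankY : (\rank Y <= 4)%N.
  by apply: leq_trans (mxrank_adds_row_le _ _) _; rewrite rank_derived.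
have := mxrank_cap_compl K Y; have := mxrankS (capmxSr K Y).
set m := \rank (K :\: Y) => rank_cap rank_sum.
have W_ker : row_base (K :\: Y)%MS *m f1 = 0 /\ row_base (K :\: Y)%MS *m f2 = 0.
  have WK : (row_base (K :\: Y)%MS <= K)%MS by rewrite eq_row_base diffmxSl.
  by split; apply/sub_kermxP; apply: submx_trans WK _; [apply: capmxSl | apply: capmxSr].
have [E [AE BE]] : exists E : 'M_(n, 1 + m),
    col_mx u2 (row_base (K :\: Y)%MS) *m E = 1%:M /\ (Y + u1)%MS *m E = 0.
  by apply: dual_forms_mod; apply: complement_indep; rewrite ?ev_ad.
exists m, (row_base (K :\: Y)%MS), E; split => //; first lia.
move=> j; rewrite -!ev_ad.
by split; apply: (ev_ann (row_sub j _)); [exact: W_ker.1 | exact: W_ker.2].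
Qed.

End GeneralizedHeisenberg.

Section ImD3Bound.
Variables (F : fieldType) (n : nat) (c : 'I_n -> 'I_n -> 'I_n -> F).
Hypothesis lie : is_lie_sc c.
Hypothesis heis : gen_heisenberg c 3.
Local Notation br := (lbr c).
Local Notation L2 := (derived c).

Variables (x u1 u2 p q : 'rV[F]_n) (zeta1 zeta2 zeta3 : 'cV[F]_n).
Local Notation z1 := (br x u1).
Local Notation z2 := (br x u2).
Local Notation z3 := (br p q).
Hypothesis z1zeta1 : ev z1 zeta1 = 1.
Hypotheses (z1zeta2 : ev z1 zeta2 = 0) (z2zeta2 : ev z2 zeta2 = 1).
Hypotheses (z1zeta3 : ev z1 zeta3 = 0) (z2zeta3 : ev z2 zeta3 = 0) (z3zeta3 : ev z3 zeta3 = 1).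

Variables (m : nat) (W : 'M[F]_(m, n)) (E : 'M[F]_(n, 1 + m)).
Local Notation w j := (row j W).
Local Notation etau := (col (lshift m 0) E).
Local Notation eta j := (col (rshift 1 j) E).
Hypothesis W_ker : forall j, ev (br x (w j)) zeta1 = 0 /\ ev (br x (w j)) zeta2 = 0.
Hypothesis dualE : col_mx u2 W *m E = 1%:M.
Hypothesis annE : (L2 + x + u1)%MS *m E = 0.
Hypothesis m_gt1 : (1 < m)%N.
Hypothesis n_gt6 : (6 < n)%N.

Let arith01 := (mul1r, mulr1, mul0r, mulr0, subr0, sub0r, addr0, add0r, oppr0).

Lemma E_ann k : [/\ L2 *m col k E = 0, ev x (col k E) = 0 & ev u1 (col k E) = 0].
Proof.
have ann B : (B <= L2 + x + u1)%MS -> B *m col k E = 0.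
  by move=> sB; rewrite colE mulmxA (mx_ann sB annE) mul0mx.
rewrite /ev !ann ?mxE //; first by rewrite addsmxSr.
  by rewrite -addsmxA addsmxC -addsmxA addsmxSl.
by rewrite -addsmxA addsmxSl.
Qed.

Lemma ev_dual i k : ev (row i (col_mx u2 W)) (col k E) = (i == k)%:R.
Proof.
transitivity ((col_mx u2 W *m E) i k); last by rewrite dualE mxE.
by rewrite /ev !mxE; apply: eq_bigr => r _; rewrite !mxE.
Qed.

Lemma ev_u2_etau : ev u2 etau = 1.
Proof. by have := ev_dual (lshift m 0) (lshift m 0); rewrite rowKu eqxx row_id. Qed.

Lemma ev_u2_eta j : ev u2 (eta j) = 0.
Proof. by have := ev_dual (lshift m 0) (rshift 1 j); rewrite rowKu row_id eq_lrshift. Qed.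

Lemma ev_w_eta i j : ev (w i) (eta j) = (i == j)%:R.
Proof. by have := ev_dual (rshift 1 i) (rshift 1 j); rewrite rowKd eq_rshift. Qed.

(* Each block added below is detected by forms zeta /\ eta vanishing on S0 and on the
   earlier blocks, so it raises the rank by its full size. *)
Local Notation S0 := (symsp F n).
Local Notation S1 := (S0 + tens z1 z2 + tens z1 z3 + tens z2 z3)%MS.
Local Notation S2 := (S1 + d3 c x u1 u2)%MS.
Local Notation S3 := (S2 + \matrix_(j < m) d3 c x u1 (w j))%MS.
Local Notation S4 := (S3 + \matrix_(j < m) d3 c x u2 (w j))%MS.

Lemma rank_S1 : \rank S1 = (\rank S0 + 3)%N.
Proof.
rewrite (mxrank_adds_form (g := wedge zeta2 zeta3)).
rewrite (mxrank_adds_form (g := wedge zeta1 zeta3)).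
rewrite (mxrank_adds_form (g := wedge zeta1 zeta2)) -?addnA //.
all: try do !apply: addsmx_sub_kermx.
all: rewrite ?symsp_sub_ker_wedge ?ev_tens_wedge //.
all: by rewrite ?z1zeta1 ?z1zeta2 ?z2zeta2 ?z1zeta3 ?z2zeta3 ?z3zeta3 ?arith01 ?oppr0 ?oner_neq0.
Qed.

Lemma S1_ker a g : L2 *m g = 0 -> (S1 <= kermx (wedge a g))%MS.
Proof.
move=> L2g; do !apply: addsmx_sub_kermx; rewrite ?symsp_sub_ker_wedge //.
all: by rewrite ev_tens_wedge !(ev_ann (lbr_sub_derived _ _ _) L2g) mulr0 mul0r subrr.
Qed.

Lemma rank_S2 : \rank S2 = (\rank S1 + 1)%N.
Proof.
have [L2E xE u1E] := E_ann (lshift m 0).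
apply: (mxrank_adds_form (g := wedge zeta1 etau)); first exact: S1_ker.
by rewrite ev_d3_wedge // z1zeta1 ev_u2_etau xE u1E !arith01 oner_neq0.
Qed.

Lemma rank_S3 : \rank S3 = (\rank S2 + m)%N.
Proof.
apply: (mxrank_adds_biorth (g := fun j => wedge zeta1 (eta j))) => [j | i j].
  have [L2E xE u1E] := E_ann (rshift 1 j).
  apply: addsmx_sub_kermx; first exact: S1_ker.
  by rewrite ev_d3_wedge // ev_u2_eta xE u1E !arith01.
have [L2E xE u1E] := E_ann (rshift 1 j).
by rewrite ev_d3_wedge // z1zeta1 ev_w_eta xE u1E !arith01.
Qed.

Lemma rank_S4 : \rank S4 = (\rank S3 + m)%N.
Proof.
apply: (mxrank_adds_biorth (g := fun j => wedge zeta2 (eta j))) => [j | i j];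
  have [L2E xE u1E] := E_ann (rshift 1 j).
  apply: addsmx_rows_sub_kermx => [|i]; last first.
    by rewrite ev_d3_wedge // z1zeta2 (W_ker i).2 xE u1E !arith01.
  apply: addsmx_sub_kermx; first exact: S1_ker.
  by rewrite ev_d3_wedge // z1zeta2 xE u1E !arith01.
by rewrite ev_d3_wedge // z2zeta2 ev_w_eta (W_ker i).2 xE ev_u2_eta !arith01.
Qed.

Lemma S4_ker_zeta3 g : L2 *m g = 0 -> ev x g = 0 ->
  (forall j, ev (br x (w j)) zeta3 = 0) \/ (ev u1 g = 0 /\ ev u2 g = 0) ->
  (S4 <= kermx (wedge zeta3 g))%MS.
Proof.
move=> L2g xg zeta3_or_g.
have xwj j : ev (br x (w j)) zeta3 * ev u1 g = 0 /\ ev (br x (w j)) zeta3 * ev u2 g = 0.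
  by case: zeta3_or_g => [-> | [-> ->]]; rewrite ?mul0r ?mulr0.
apply: addsmx_rows_sub_kermx => [|j]; last by rewrite ev_d3_wedge // z2zeta3 xg (xwj j).2 !arith01.
apply: addsmx_rows_sub_kermx => [|j]; last by rewrite ev_d3_wedge // z1zeta3 xg (xwj j).1 !arith01.
apply: addsmx_sub_kermx; first exact: S1_ker.
by rewrite ev_d3_wedge // z1zeta3 z2zeta3 xg !arith01.
Qed.

(* If zeta3 [x, w_k] <> 0 for some k, then d3(x, w_k, w_l) is new; otherwise zeta3 /\ g
   kills S4 for every g vanishing on L2 + x, and d3(p, q, e_i) is new for e_i outside
   L2 + x + p + q. *)
Lemma exists_im_d3_outside_S4 : exists (e : 'rV[F]_(n * n)) (g : 'cV[F]_(n * n)),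
  [/\ (e <= im_d3 c)%MS, (S4 <= kermx g)%MS & ev e g != 0].
Proof.
have [k /= xwk | xw0] := pickP [pred k | ev (br x (w k)) zeta3 != 0].
  have [l kl] : exists l : 'I_m, k != l.
    have m_gt0 : (0 < m)%N by lia.
    have [k0 | ] := eqVneq k (Ordinal m_gt0); last by exists (Ordinal m_gt0).
    by exists (Ordinal m_gt1); rewrite k0.
  have [L2E xE u1E] := E_ann (rshift 1 l).
  exists (d3 c x (w k) (w l)), (wedge zeta3 (eta l)); split; first exact: d3_sub_im_d3.
    by apply: S4_ker_zeta3 => //; right; rewrite u1E ev_u2_eta.
  by rewrite ev_d3_wedge // !ev_w_eta eqxx (negbTE kl) xE !arith01.
set Y := (L2 + x + p + q)%MS.
have rankY : (\rank Y < n)%N.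
  apply: leq_ltn_trans n_gt6; apply: leq_trans (mxrank_adds_row_le _ _) _.
  rewrite -[6%N]/(5 + 1)%N leq_add2r; apply: leq_trans (mxrank_adds_row_le _ _) _.
  rewrite -[5%N]/(4 + 1)%N leq_add2r; apply: leq_trans (mxrank_adds_row_le _ _) _.
  by rewrite rank_derived.
have [i ei_nsub] := exists_delta_nsub rankY.
have [g Yg eig] := separating_form ei_nsub.
have L2g : L2 *m g = 0 by apply: mx_ann Yg; rewrite /Y -!addsmxA addsmxSl.
have xg : ev x g = 0.
  apply: ev_ann Yg; apply: submx_trans (addsmxSl _ _).
  by apply: submx_trans (addsmxSl _ _); apply: addsmxSr.
have pg : ev p g = 0 by apply: ev_ann Yg; apply: submx_trans (addsmxSl _ _); apply: addsmxSr.
have qg : ev q g = 0 by apply: ev_ann Yg; apply: addsmxSr.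
exists (d3 c p q (ebas F i)), (wedge zeta3 g); split; first exact: d3_sub_im_d3.
  by apply: S4_ker_zeta3 => //; left => j; move/negbFE/eqP: (xw0 j).
by rewrite ev_d3_wedge // z3zeta3 [ev (ebas F i) g]eig pg qg !arith01 oner_neq0.
Qed.

Lemma rank_im_d3_symsp : (\rank S0 + (2 * m + 5) <= \rank (im_d3 c + S0))%N.
Proof.
have [e [g [e_sub S4g eg]]] := exists_im_d3_outside_S4.
have d3T u v w' : (d3 c u v w' <= im_d3 c + S0)%MS.
  exact: submx_trans (d3_sub_im_d3 _ _ _ _) (addsmxSl _ _).
have tensT u v z : (z <= L2)%MS -> (tens (br u v) z <= im_d3 c + S0)%MS.
  by move=> zL2; rewrite -d3_derived.
have S4T : (S4 + e <= im_d3 c + S0)%MS.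
  rewrite addsmx_sub (submx_trans e_sub (addsmxSl _ _)) andbT.
  rewrite addsmx_sub; apply/andP; split; last by apply/row_subP => j; rewrite rowK d3T.
  rewrite addsmx_sub; apply/andP; split; last by apply/row_subP => j; rewrite rowK d3T.
  rewrite addsmx_sub d3T andbT.
  by do 3 rewrite addsmx_sub tensT ?lbr_sub_derived // andbT; apply: addsmxSr.
move: (mxrankS S4T); rewrite (mxrank_adds_form S4g eg) rank_S4 rank_S3 rank_S2 rank_S1.
lia.
Qed.

End ImD3Bound.

Lemma s_inv5_count_contra n m k s t :
  (7 < n)%N -> (n - 6 <= m)%N -> (k <= n * n - 3)%N -> (n * n.+1 <= s.*2)%N ->
  (s + (2 * m + 5) <= t)%N -> ((n.-1 * n.-2) %/ 2 + 1 != 5 + (k - t))%N.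
Proof.
case: n => [|[|n]] // n_gt7 m_ge k_le s_ge t_ge.
by rewrite /= !mulSn !mulnS in k_le s_ge *; lia.
Qed.

Theorem lemma2p8 (F : closedFieldType) (n : nat)
  (c : 'I_n -> 'I_n -> 'I_n -> F) :
  (2 \notin [pchar F])%N ->
  is_lie_sc c ->
  lie_nilpotent c ->
  gen_heisenberg c 3 ->
  s_inv c = 5 ->
  (n <= 7)%N.
Proof.
move=> char2 lie _ heis /eqP; rewrite subr_eq -PoszD eqz_nat leqNgt.
apply: contraL => n_gt7; have two_neq0 : 2%:R != 0 :> F by rewrite inE /= in char2.
have [x [u1 [u2 [p [q [zeta1 [zeta2 [zeta3 flag]]]]]]]] := exists_derived_flag lie heis.
case: flag => z1zeta1 [z1zeta2 z2zeta2] [z1zeta3 z2zeta3 z3zeta3].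
have [m [W [E [m_ge W_ker dualE annE]]]] :=
  exists_complement_forms lie heis two_neq0 z1zeta1 z1zeta2 z2zeta2.
apply: (s_inv5_count_contra n_gt7 m_ge _ (rank_symsp F n)).
  by rewrite mxrank_ker leq_sub2l // -(rank_derived heis) mxrankS // derived_sub_d2.
have := rank_im_d3_symsp lie heis z1zeta1 z1zeta2 z2zeta2 z1zeta3 z2zeta3 z3zeta3 W_ker dualE annE.
by apply; lia.
Qed.
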